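(* $\mathbf{LMO}(\Sigma)\subseteq V_\Sigma(\overline{\mathbf{J}})$.
   Context: A MON-1qfa over a finite alphabet $\Sigma$ is a tuple $A=\langle\Sigma\cup\{\#\},(O_c)_{c\in\Sigma\cup\{\#\}},\pi_0,F\rangle$, where $\pi_0\in\mathbb{C}^{1\times m}$ has norm $1$, each $O_c$ is an observable (Hermitian $m\times m$ matrix) with spectral decomposition $O_c=\sum_{r\in V(O_c)} r\,P_c(r)$ into orthogonal projectors, and $F\subseteq V(O_\#)$. For $x=x_1\cdots x_n$, with $\rho_0=\pi_0^\dagger\pi_0$ and $\rho_i=\sum_{r}P_{x_i}(r)\rho_{i-1}P_{x_i}(r)$, the acceptance probability is $p_A(x)=\sum_{r\in F}\mathrm{tr}(P_\#(r)\rho_n)$. $A$ recognizes $L$ with isolated cut-point $\lambda$ if for all $x\in\Sigma^*$, $x\in L\Leftrightarrow p_A(x)>\lambda$, and there is $\delta>0$ with $|p_A(x)-\lambda|\ge\delta$ for all $x$. $\mathbf{LMO}(\Sigma)$ is the class of languages over $\Sigma$ recognized by some MON-1qfa with isolated cut-point. For a regular language $L$, $M(L)$ is its syntactic monoid and $\phi_L:\Sigma^*\to M(L)$ the syntactic morphism. $\overline{\mathbf{J}}$ is the literal pseudovariety of $J$-trivial syntactic monoids $M(L)$ (i.e. $MxM=MyM\Rightarrow x=y$) whose syntactic morphism satisfies $\phi_L(\sigma)\phi_L(\sigma)=\phi_L(\sigma)$ for all $\sigma\in\Sigma$; $V_\Sigma(\overline{\mathbf{J}})$ is the class of regular languages $L\subseteq\Sigma^*$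 such that $M(L)$ is $J$-trivial and $\phi_L(\sigma)^2=\phi_L(\sigma)$ for every $\sigma\in\Sigma$. *)

From HB Require Import structures.
From mathcomp Require Import all_boot all_order all_algebra.
From mathcomp Require Import reals.
From mathcomp Require Import complex.

Unset Implicit Arguments.
Unset Strict Implicit.
Unset Printing Implicit Defensive.

Import Order.TTheory GRing.Theory Num.Theory.
Local Open Scope ring_scope.

Definition adjmx (R : rcfType) (p q : nat) (A : 'M[R[i]]_(p, q)) : 'M[R[i]]_(q, p) :=
  (map_mx (@conjc R) A)^T.
Arguments adjmx {R p q} A.

Section MON1qfa.
Variables (R : realType) (Sigma : finType) (m : nat).
Local Notation C := R[i].

(* The alphabet Sigma \cup {#} is represented by [option Sigma]:
   [Some s] is the letter s and [None] is the end-marker #.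
   For each c, the observable O_c is given together with its spectral
   decomposition O_c = \sum_(i < nout c) eigv c i * proj c i, where
   V(O_c) = {eigv c i | i} (distinct real eigenvalues) and proj c i = P_c(eigv c i)
   are the (nonzero, pairwise orthogonal) eigenprojectors, summing to the identity.
   F is the set of indices of accepting eigenvalues of O_#. *)
Record mon1qfa := MON1qfa {
  nout : option Sigma -> nat;
  eigv : forall c, 'I_(nout c) -> R;
  proj : forall c, 'I_(nout c) -> 'M[C]_m;
  obs  : option Sigma -> 'M[C]_m;
  pi0  : 'rV[C]_m;
  accF : {set 'I_(nout None)};
  obs_herm  : forall c, adjmx (obs c) = obs c;
  obs_spec  : forall c, obs c = \sum_(i < nout c) real_complex R (eigv c i) *: proj c i;
  eigv_inj  : forall c, injective (eigv c);
  proj_herm : forall c i, adjmx (proj c i) = proj c i;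
  proj_idem : forall c i, proj c i *m proj c i = proj c i;
  proj_orth : forall c i j, i != j -> proj c i *m proj c j = 0;
  proj_sum  : forall c, \sum_(i < nout c) proj c i = 1%:M;
  proj_neq0 : forall c i, proj c i != 0;
  pi0_norm  : (pi0 *m adjmx pi0) ord0 ord0 = 1
}.

Variable A : mon1qfa.

Definition measure_step (c : option Sigma) (rho : 'M[C]_m) : 'M[C]_m :=
  \sum_(i < nout A c) (proj A c i *m rho *m proj A c i).

Definition rho0 : 'M[C]_m := adjmx (pi0 A) *m pi0 A.

Definition rho_of (x : seq Sigma) : 'M[C]_m :=
  foldl (fun rho s => measure_step (Some s) rho) rho0 x.

(* p_A(x) = sum_{r in F} tr(P_#(r) rho_n)  (a real number; we take its real part) *)
Definition acc_prob (x : seq Sigma) : R :=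
  complex.Re (\sum_(i in accF A) \tr (proj A None i *m rho_of x)).

End MON1qfa.
Arguments acc_prob {R Sigma m} A x.
Arguments rho_of {R Sigma m} A x.
Arguments measure_step {R Sigma m} A c rho.
Arguments rho0 {R Sigma m} A.

Definition recognizes_isolated {Sigma : finType} {R : realType} {m : nat}
    (A : mon1qfa R Sigma m) (L : pred (seq Sigma)) (lam : R) : Prop :=
  (forall x, L x <-> lam < acc_prob A x) /\
  (exists2 d : R, 0 < d & forall x, d <= `|acc_prob A x - lam|).

Definition LMO {Sigma : finType} (R : realType) (L : pred (seq Sigma)) : Prop :=
  exists (m : nat) (A : mon1qfa R Sigma m) (lam : R), recognizes_isolated A L lam.

Definition regular {Sigma : finType} (L : pred (seq Sigma)) : Prop :=
  exists (Q : finType) (q0 : Q) (delta : Q -> Sigma -> Q) (Fin : pred Q),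
    forall w, L w = Fin (foldl delta q0 w).

(* syntactic congruence; M(L) = (seq Sigma)/synt_eq L, phi_L w = class of w *)
Definition synt_eq {Sigma : finType} (L : pred (seq Sigma)) (u v : seq Sigma) : Prop :=
  forall x y, L (x ++ u ++ y) = L (x ++ v ++ y).

(* the class of w lies in M phi_L(u) M *)
Definition in_ideal {Sigma : finType} (L : pred (seq Sigma)) (u w : seq Sigma) : Prop :=
  exists a b, synt_eq L w (a ++ u ++ b).

Definition synt_J_trivial {Sigma : finType} (L : pred (seq Sigma)) : Prop :=
  forall u v, (forall w, in_ideal L u w <-> in_ideal L v w) -> synt_eq L u v.

Definition synt_letters_idem {Sigma : finType} (L : pred (seq Sigma)) : Prop :=
  forall s : Sigma, synt_eq L [:: s; s] [:: s].

Definition in_V_Jbar {Sigma : finType} (L : pred (seq Sigma)) : Prop :=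
  regular L /\ synt_J_trivial L /\ synt_letters_idem L.

(* The states of a MON-1qfa are matrices on which every measurement step acts
   as an orthogonal projection for the Hilbert-Schmidt product, so words act by
   contractions, the adjoint of a word is its reverse, and the reachable states
   are bounded.  Boundedness and the isolated cut-point leave only finitely many
   Nerode classes, and idempotence of the projections gives phi(s)^2 = phi(s).
   For J-triviality, if u and v generate the same ideal then, for idempotent
   powers Z and W, u ~ Z^n u W^n' for all n, n' while v ~ c u e with the
   letters of c in Z and those of e in W.  A state fixed by Z is fixed by all
   its letters, so the effect of c on a state is a coboundary z - Z z, whose
   averages along the powers of Z stay bounded; averaging the acceptance
   probabilities of x Z^n u W^n' y over n, n' < N then forbids x u y and
   x c u e y from lying on different sides of the cut-point. *)

From HB Require Import structures.
From mathcomp Require Import all_boot all_order all_algebra reals complex.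
From mathcomp Require Import ring lra zify.
From Stdlib Require Import ClassicalEpsilon.
Import Order.TTheory GRing.Theory Num.Theory.
Local Open Scope ring_scope.
Set Implicit Arguments. Unset Strict Implicit. Unset Printing Implicit Defensive.

Section HilbertSchmidt.
Variables (R : rcfType) (p q : nat).
Local Notation M := 'M[R[i]]_(p, q).
Local Notation coord_index := ('I_p * 'I_q * bool)%type.

(* A complex p x q matrix as a real vector of 2pq coordinates; [hsdot] is the
   Euclidean product of these vectors, i.e. the Hilbert-Schmidt product
   Re tr(X^* Y) (see [hsdotE]). *)
Definition mx_coord (X : M) (t : coord_index) : R :=
  if t.2 then complex.Re (X t.1.1 t.1.2) else complex.Im (X t.1.1 t.1.2).

Definition hsdot (X Y : M) : R := \sum_t mx_coord X t * mx_coord Y t.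
Definition hsnorm2 (X : M) : R := hsdot X X.

Lemma mx_coordD X Y t : mx_coord (X + Y) t = mx_coord X t + mx_coord Y t.
Proof. by rewrite /mx_coord !mxE; case: t.2; rewrite raddfD. Qed.

Lemma mx_coordN X t : mx_coord (- X) t = - mx_coord X t.
Proof. by rewrite /mx_coord !mxE; case: t.2; rewrite raddfN. Qed.

Lemma mx_coord0 t : mx_coord 0 t = 0.
Proof. by rewrite /mx_coord !mxE; case: t.2. Qed.

Lemma mx_coord_sum (I : Type) (r : seq I) (P : pred I) (F : I -> M) t :
  mx_coord (\sum_(i <- r | P i) F i) t = \sum_(i <- r | P i) mx_coord (F i) t.
Proof. exact: (big_morph (mx_coord^~ t) (fun X Y => mx_coordD X Y t) (mx_coord0 t)). Qed.

Lemma hsdotC X Y : hsdot X Y = hsdot Y X.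
Proof. by apply: eq_bigr => t _; rewrite mulrC. Qed.

Lemma hsdotDl X Y Z : hsdot (X + Y) Z = hsdot X Z + hsdot Y Z.
Proof. by rewrite /hsdot -big_split; apply: eq_bigr => t _; rewrite mx_coordD mulrDl. Qed.

Lemma hsdotNl X Y : hsdot (- X) Y = - hsdot X Y.
Proof. by rewrite /hsdot -sumrN; apply: eq_bigr => t _; rewrite mx_coordN mulNr. Qed.

Lemma hsdotBl X Y Z : hsdot (X - Y) Z = hsdot X Z - hsdot Y Z.
Proof. by rewrite hsdotDl hsdotNl. Qed.

Lemma hsdotDr X Y Z : hsdot Z (X + Y) = hsdot Z X + hsdot Z Y.
Proof. by rewrite hsdotC hsdotDl !(hsdotC Z). Qed.

Lemma hsdotNr X Y : hsdot Y (- X) = - hsdot Y X.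
Proof. by rewrite hsdotC hsdotNl hsdotC. Qed.

Lemma hsdotBr X Y Z : hsdot Z (X - Y) = hsdot Z X - hsdot Z Y.
Proof. by rewrite hsdotDr hsdotNr. Qed.

Lemma hsdot0r X : hsdot X 0 = 0.
Proof. by rewrite /hsdot big1 // => t _; rewrite mx_coord0 mulr0. Qed.

Lemma hsdot_suml (I : Type) (r : seq I) (P : pred I) (F : I -> M) Y :
  hsdot (\sum_(i <- r | P i) F i) Y = \sum_(i <- r | P i) hsdot (F i) Y.
Proof.
rewrite /hsdot; under eq_bigr => t _ do rewrite mx_coord_sum mulr_suml.
by rewrite exchange_big.
Qed.

Lemma hsdot_sumr (I : Type) (r : seq I) (P : pred I) (F : I -> M) Y :
  hsdot Y (\sum_(i <- r | P i) F i) = \sum_(i <- r | P i) hsdot Y (F i).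
Proof. by rewrite hsdotC hsdot_suml; apply: eq_bigr => i _; rewrite hsdotC. Qed.

Lemma hsnorm2_ge0 X : 0 <= hsnorm2 X.
Proof. by apply: sumr_ge0 => t _; rewrite -expr2 sqr_ge0. Qed.

Lemma hsnorm2N X : hsnorm2 (- X) = hsnorm2 X.
Proof. by rewrite /hsnorm2 hsdotNl hsdotNr opprK. Qed.

Lemma sqr_mx_coord_le X t : mx_coord X t ^+ 2 <= hsnorm2 X.
Proof.
rewrite /hsnorm2 /hsdot (bigD1 t) //= -expr2 lerDl.
by apply: sumr_ge0 => s _; rewrite -expr2 sqr_ge0.
Qed.

Lemma hsnorm2_eq0 X : hsnorm2 X = 0 -> X = 0.
Proof.
move=> X0; apply/matrixP => i j; rewrite mxE.
have coord0 b : mx_coord X (i, j, b) = 0.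
  by apply/eqP; rewrite -sqrf_eq0 eq_le sqr_ge0 andbT -X0 sqr_mx_coord_le.
by move: (coord0 true) (coord0 false); rewrite /mx_coord /=; case: (X i j) => a b /= -> ->.
Qed.

Lemma hsdotE X Y : hsdot X Y = complex.Re (\tr (adjmx X *m Y)).
Proof.
have ReJM (a b : R[i]) : complex.Re (conjc a * b) =
    complex.Re a * complex.Re b + complex.Im a * complex.Im b.
  by case: a; case: b => b1 b2 a1 a2 /=; ring.
rewrite /mxtrace raddf_sum /hsdot.
rewrite -(pair_big xpredT xpredT (fun ij b => mx_coord X (ij, b) * mx_coord Y (ij, b))) /=.
rewrite -(pair_big xpredT xpredT (fun i j => \sum_b mx_coord X (i, j, b) * mx_coord Y (i, j, b))) /=.
rewrite exchange_big; apply: eq_bigr => j _.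
rewrite mxE raddf_sum; apply: eq_bigr => i _.
by rewrite big_bool /= /adjmx !mxE ReJM addrC.
Qed.

(* The AM-GM form of Cauchy-Schwarz, which avoids square roots. *)
Lemma hsdot_le (s t : R) X Y : 0 <= s -> 0 <= t ->
  2 * s * t * `|hsdot X Y| <= t ^+ 2 * hsnorm2 X + s ^+ 2 * hsnorm2 Y.
Proof.
move=> s0 t0.
have signed_le (e : R) : e = 1 \/ e = -1 ->
    2 * s * t * (e * hsdot X Y) <= t ^+ 2 * hsnorm2 X + s ^+ 2 * hsnorm2 Y.
  move=> he; rewrite /hsnorm2 /hsdot !mulr_sumr -big_split /=.
  apply: ler_sum => k _.
  have : 0 <= (t * mx_coord X k - e * s * mx_coord Y k) ^+ 2 by apply: sqr_ge0.
  by case: he => ->; nra.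
have [ge0|lt0] := boolP (0 <= hsdot X Y).
  by rewrite ger0_norm //; have := signed_le 1 (or_introl erefl); rewrite mul1r.
by rewrite ltr0_norm ?ltNge //; have := signed_le (-1) (or_intror erefl); rewrite mulN1r.
Qed.

Lemma hsnorm2D_le X Y : hsnorm2 (X + Y) <= 2 * hsnorm2 X + 2 * hsnorm2 Y.
Proof.
rewrite /hsnorm2 /hsdot !mulr_sumr -big_split /=; apply: ler_sum => k _.
rewrite mx_coordD; have := sqr_ge0 (mx_coord X k - mx_coord Y k); nra.
Qed.

Lemma hsnorm2B_le X Y : hsnorm2 (X - Y) <= 2 * hsnorm2 X + 2 * hsnorm2 Y.
Proof. by rewrite -(hsnorm2N Y) hsnorm2D_le. Qed.

Lemma sqr_sum_le (N : nat) (c : 'I_N -> R) :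
  (\sum_k c k) ^+ 2 <= N%:R * \sum_k c k ^+ 2.
Proof.
rewrite expr2 mulr_suml.
apply: (@le_trans _ _ (\sum_k \sum_l (c k ^+ 2 + c l ^+ 2) / 2)).
  apply: ler_sum => k _; rewrite mulr_sumr; apply: ler_sum => l _.
  by have := sqr_ge0 (c k - c l); nra.
rewrite (eq_bigr (fun k => (N%:R * c k ^+ 2 + \sum_l c l ^+ 2) / 2)); last first.
  by move=> k _; rewrite -mulr_suml big_split /= sumr_const card_ord mulr_natl.
rewrite -mulr_suml big_split /= -mulr_sumr sumr_const card_ord mulr_natl.
lra.
Qed.

Lemma hsnorm2_sum_le (N : nat) (X : 'I_N -> M) :
  hsnorm2 (\sum_k X k) <= N%:R * \sum_k hsnorm2 (X k).
Proof.
rewrite /hsnorm2 /hsdot exchange_big mulr_sumr.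
apply: ler_sum => t _; rewrite mx_coord_sum -expr2.
under eq_bigr do rewrite -expr2.
exact: sqr_sum_le.
Qed.

End HilbertSchmidt.

Section Adjoint.
Variable R : rcfType.

Lemma adjmxM p q r (X : 'M[R[i]]_(p, q)) (Y : 'M[R[i]]_(q, r)) :
  adjmx (X *m Y) = adjmx Y *m adjmx X.
Proof. by rewrite /adjmx map_mxM trmx_mul. Qed.

Lemma adjmx_sum p q (I : Type) (r : seq I) (P : pred I) (F : I -> 'M[R[i]]_(p, q)) :
  adjmx (\sum_(i <- r | P i) F i) = \sum_(i <- r | P i) adjmx (F i).
Proof.
apply/matrixP => i j; rewrite /adjmx !mxE !summxE rmorph_sum.
by apply: eq_bigr => k _; rewrite !mxE.
Qed.

End Adjoint.

Section WordPower.
Variable Sigma : Type.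

Definition wpow (w : seq Sigma) n := flatten (nseq n w).

Lemma wpowS w n : wpow w n.+1 = w ++ wpow w n. Proof. by []. Qed.

Lemma wpowSr w n : wpow w n.+1 = wpow w n ++ w.
Proof.
elim: n => [|n IH]; first by rewrite /wpow /= cats0.
by rewrite wpowS {1}IH catA -wpowS.
Qed.

Lemma wpowD w n k : wpow w (n + k) = wpow w n ++ wpow w k.
Proof. by elim: n => [|n IH] //=; rewrite addSn !wpowS IH catA. Qed.

Lemma wpowM w n k : wpow w (n * k) = wpow (wpow w n) k.
Proof. by elim: k => [|k IH]; rewrite ?muln0 // mulnS wpowD IH wpowS. Qed.

Lemma rev_wpow w n : rev (wpow w n) = wpow (rev w) n.
Proof. by elim: n => [|n IH] //; rewrite wpowS rev_cat IH wpowSr. Qed.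

End WordPower.

Section Measurement.
Variables (R : realType) (Sigma : finType) (m : nat) (A : mon1qfa R Sigma m).
Local Notation M := 'M[R[i]]_m.
Local Notation E c := (measure_step A c).

Lemma measure_step_is_linear c : linear (measure_step A c).
Proof.
move=> a X Y; rewrite /measure_step scaler_sumr -big_split /=.
by apply: eq_bigr => i _; rewrite mulmxDr mulmxDl -scalemxAr -scalemxAl.
Qed.

HB.instance Definition _ c :=
  GRing.isLinear.Build R[i] M M *:%R (measure_step A c) (measure_step_is_linear c).

Lemma hsdot_measure_step c X Y : hsdot (E c X) Y = hsdot X (E c Y).
Proof.
rewrite !hsdotE /measure_step adjmx_sum mulmx_suml mulmx_sumr; congr complex.Re.
rewrite !raddf_sum; apply: eq_bigr => i _ /=.
by rewrite !adjmxM proj_herm -!mulmxA mxtrace_mulC -!mulmxA.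
Qed.

Lemma measure_step_idem c X : E c (E c X) = E c X.
Proof.
rewrite /measure_step; apply: eq_bigr => i _.
rewrite mulmx_sumr mulmx_suml (bigD1 i) //= big1 ?addr0.
  by rewrite !mulmxA proj_idem -!mulmxA proj_idem.
by move=> j ji; rewrite !mulmxA proj_orth 1?eq_sym // !mul0mx.
Qed.

(* Pythagoras: a self-adjoint idempotent is an orthogonal projection. *)
Lemma hsnorm2_measure_step c X : hsnorm2 X = hsnorm2 (E c X) + hsnorm2 (X - E c X).
Proof.
have orth : hsdot (E c X) (X - E c X) = 0.
  by rewrite hsdot_measure_step linearB /= measure_step_idem subrr hsdot0r.
rewrite /hsnorm2 -{1 2}(subrK (E c X) X) addrC.
move: (X - _) orth => D orth.
by rewrite hsdotDl !hsdotDr orth (hsdotC D) orth addr0 add0r.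
Qed.

Lemma hsnorm2_measure_step_le c X : hsnorm2 (E c X) <= hsnorm2 X.
Proof. by rewrite (hsnorm2_measure_step c X) lerDl hsnorm2_ge0. Qed.

Lemma measure_step_fixed c X : hsnorm2 (E c X) = hsnorm2 X -> E c X = X.
Proof.
move=> eqN; have : hsnorm2 (X - E c X) = 0.
  by have := hsnorm2_measure_step c X; rewrite eqN => h; lra.
by move/hsnorm2_eq0/eqP; rewrite subr_eq0 => /eqP.
Qed.

Definition run (w : seq Sigma) (X : M) : M := foldl (fun X s => E (Some s) X) X w.

Lemma run_is_linear w : linear (run w).
Proof. by elim: w => [|s w IH] a X Y //=; rewrite /run /= -IH linearP. Qed.

HB.instance Definition _ w :=
  GRing.isLinear.Build R[i] M M *:%R (run w) (run_is_linear w).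

Lemma run_cons s w X : run (s :: w) X = run w (E (Some s) X). Proof. by []. Qed.

Lemma run_cat w1 w2 X : run (w1 ++ w2) X = run w2 (run w1 X).
Proof. by rewrite /run foldl_cat. Qed.

Lemma run_rcons w s X : run (rcons w s) X = E (Some s) (run w X).
Proof. by rewrite /run foldl_rcons. Qed.

Lemma hsdot_run w X Y : hsdot (run w X) Y = hsdot X (run (rev w) Y).
Proof.
elim: w X Y => [|s w IH] X Y //.
by rewrite run_cons IH hsdot_measure_step rev_cons run_rcons.
Qed.

Lemma hsnorm2_run_le w X : hsnorm2 (run w X) <= hsnorm2 X.
Proof.
elim: w X => [|s w IH] X //.
by rewrite run_cons (le_trans (IH _)) // hsnorm2_measure_step_le.
Qed.

Lemma run_norm_fixed w X : hsnorm2 (run w X) = hsnorm2 X ->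
  forall s, s \in w -> E (Some s) X = X.
Proof.
elim: w X => [|s w IH] X //; rewrite run_cons => eqN.
have EsX : E (Some s) X = X.
  apply: measure_step_fixed; apply/eqP.
  by rewrite eq_le hsnorm2_measure_step_le -eqN hsnorm2_run_le.
move=> s'; rewrite in_cons => /orP [/eqP -> //|s'w].
by apply: (IH X) => //; rewrite EsX in eqN.
Qed.

Lemma run_fixed w X : run w X = X -> forall s, s \in w -> E (Some s) X = X.
Proof. by move=> wX; apply: run_norm_fixed; rewrite wX. Qed.

Lemma run_letters_fixed w X : (forall s, s \in w -> E (Some s) X = X) -> run w X = X.
Proof.
elim: w X => [|s w IH] X fixX //.
by rewrite run_cons fixX ?mem_head // IH // => s' s'w; rewrite fixX // in_cons s'w orbT.
Qed.

Lemma run_rev_fixed w X : run w X = X -> run (rev w) X = X.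
Proof. by move=> wX; apply: run_letters_fixed => s; rewrite mem_rev; apply: run_fixed. Qed.

(* Mean ergodic decomposition: M is the direct sum of the fixed points and the
   range of 1 - run w, and the two are orthogonal because the adjoint
   run (rev w) has the same fixed points. *)
Lemma orthogonal_fixed_coboundary w g :
  (forall f, run w f = f -> hsdot g f = 0) -> exists z, g = z - run w z.
Proof.
move=> g_orth; pose D : 'End(M) := (\1 - linfun (run w))%VF.
have DE X : D X = X - run w X by rewrite add_lfunE opp_lfunE id_lfunE lfunE.
have orth z f : run w f = f -> hsdot (z - run w z) f = 0.
  by move=> wf; rewrite hsdotBl hsdot_run (run_rev_fixed wf) subrr.
have ker_img : (lker D :&: limg D = 0)%VS.
  apply/eqP; rewrite -subv0; apply/subvP => X /memv_capP [].
  rewrite memv_ker DE subr_eq0 memv0 => /eqP wX /memv_imgP [z _].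
  rewrite DE => Xz; apply/eqP/hsnorm2_eq0; rewrite /hsnorm2 {1}Xz; exact: orth.
have : g \in (lker D + limg D)%VS.
  suff -> : (lker D + limg D)%VS = fullv by rewrite memvf.
  apply/eqP; rewrite eqEdim subvf /= dimv_disjoint_sum //.
  by rewrite -(limg_ker_dim D fullv) capfv.
case/memv_addP => f; rewrite memv_ker DE subr_eq0 => /eqP/esym wf.
case=> _ /memv_imgP [z _ ->] gE.
suff f0 : f = 0 by exists z; rewrite gE f0 add0r DE.
apply: hsnorm2_eq0; have := g_orth f wf.
by rewrite gE hsdotDl DE orth // addr0.
Qed.

Definition accept_proj : M := \sum_(i in accF _ _ _ A) proj _ _ _ A None i.

Lemma rho_ofE x : rho_of A x = run x (rho0 A). Proof. by []. Qed.

Lemma acc_probE x : acc_prob A x = hsdot accept_proj (rho_of A x).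
Proof.
have adjQ : adjmx accept_proj = accept_proj.
  by rewrite adjmx_sum; apply: eq_bigr => i _; rewrite proj_herm.
by rewrite hsdotE adjQ /acc_prob mulmx_suml; congr complex.Re; rewrite raddf_sum.
Qed.

Lemma acc_prob_cat x w y :
  acc_prob A (x ++ w ++ y) = hsdot (run (rev y) accept_proj) (run w (rho_of A x)).
Proof. by rewrite acc_probE rho_ofE !run_cat hsdotC hsdot_run hsdotC. Qed.

End Measurement.

Section ErgodicAverage.
Variables (R : realType) (Sigma : finType) (m : nat) (A : mon1qfa R Sigma m).
Local Notation M := 'M[R[i]]_m.
Local Notation run := (run A).

Lemma coboundary_of_subset w c X : {subset c <= w} ->
  exists z, run c X - X = z - run w z.
Proof.
move=> cw; apply: orthogonal_fixed_coboundary => f wf.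
have cf : run (rev c) f = f.
  by apply: run_letters_fixed => s; rewrite mem_rev => /cw; apply: run_fixed.
by rewrite hsdotBl hsdot_run cf subrr.
Qed.

Lemma hsnorm2_coboundary_le w z : hsnorm2 (z - run w z) <= 4 * hsnorm2 z.
Proof. by apply: le_trans (hsnorm2B_le _ _) _; have := hsnorm2_run_le A w z; lra. Qed.

Definition ergodic_sum w N (X : M) : M := \sum_(k < N) run (wpow w k) X.

Lemma ergodic_sumD w N X Y : ergodic_sum w N (X + Y) = ergodic_sum w N X + ergodic_sum w N Y.
Proof. by rewrite -big_split; apply: eq_bigr => k _; rewrite linearD. Qed.

Lemma ergodic_sum_coboundary w N z :
  ergodic_sum w N (z - run w z) = z - run (wpow w N) z.
Proof.
elim: N => [|N IH]; first by rewrite /ergodic_sum big_ord0 subrr.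
rewrite /ergodic_sum big_ord_recr /= -/(ergodic_sum _ _ _) IH linearB /=.
by rewrite -run_cat -wpowS addrA subrK.
Qed.

Lemma hsnorm2_ergodic_sum_le w N X : hsnorm2 (ergodic_sum w N X) <= N%:R ^+ 2 * hsnorm2 X.
Proof.
apply: le_trans (hsnorm2_sum_le _) _; rewrite expr2 -mulrA ler_wpM2l ?ler0n //.
apply: le_trans (_ : _ <= \sum_(k < N) hsnorm2 X) _.
  by apply: ler_sum => k _; apply: hsnorm2_run_le.
by rewrite sumr_const card_ord mulr_natl.
Qed.

Variables (w v u : seq Sigma).

Definition ergodic_pair N (X Y : M) : R :=
  hsdot (ergodic_sum (rev v) N Y) (run u (ergodic_sum w N X)).

Lemma ergodic_pair_acc N x y :
  ergodic_pair N (rho_of A x) (run (rev y) (accept_proj A)) =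
  \sum_(n' < N) \sum_(n < N) acc_prob A (x ++ (wpow w n ++ u ++ wpow v n') ++ y).
Proof.
rewrite /ergodic_pair /ergodic_sum hsdot_suml; apply: eq_bigr => n' _.
rewrite [run u _]linear_sum hsdot_sumr; apply: eq_bigr => n _.
by rewrite acc_prob_cat !run_cat hsdot_run rev_wpow revK.
Qed.

(* Coboundaries average out: their ergodic sums stay bounded while the
   form itself grows like N^2. *)
Lemma ergodic_pair_coboundary_le N X Y z z' : (0 < N)%N ->
  2 * N%:R * `|ergodic_pair N (X + (z - run w z)) (Y + (z' - run (rev v) z'))
               - ergodic_pair N X Y|
  <= N%:R ^+ 2 * (hsnorm2 X + 2 * hsnorm2 Y + 4 * hsnorm2 z + 12 * hsnorm2 z').
Proof.
move=> N_gt0.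
rewrite /ergodic_pair (ergodic_sumD _ _ X) (ergodic_sumD _ _ Y) !ergodic_sum_coboundary linearD /=.
set SY := ergodic_sum _ N Y; set SX := ergodic_sum _ N X.
set D := z - _; set D' := z' - _.
have -> : hsdot (SY + D') (run u SX + run u D) - hsdot SY (run u SX)
    = hsdot (SY + D') (run u D) + hsdot D' (run u SX).
  by rewrite hsdotDr !hsdotDl; lra.
apply: le_trans (_ : 2 * N%:R * (`|hsdot (SY + D') (run u D)| + `|hsdot D' (run u SX)|) <= _).
  by rewrite ler_wpM2l ?mulr_ge0 ?ler0n // ler_normD.
have dot1 := hsdot_le (SY + D') (run u D) (ler0n _ N) ler01.
have dot2 := hsdot_le D' (run u SX) ler01 (ler0n _ N).
rewrite expr1n mul1r mulr1 in dot1; rewrite expr1n mul1r mulr1 in dot2.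
have SYD'_le := hsnorm2D_le SY D'.
have SY_le : hsnorm2 SY <= N%:R ^+ 2 * hsnorm2 Y by apply: hsnorm2_ergodic_sum_le.
have SX_le : hsnorm2 (run u SX) <= N%:R ^+ 2 * hsnorm2 X.
  exact: le_trans (hsnorm2_run_le _ _ _) (hsnorm2_ergodic_sum_le _ _ _).
have D'_le : hsnorm2 D' <= 4 * hsnorm2 z' by apply: hsnorm2_coboundary_le.
have D_le : hsnorm2 (run u D) <= 4 * hsnorm2 z.
  exact: le_trans (hsnorm2_run_le _ _ _) (hsnorm2_coboundary_le _ _).
set P := N%:R ^+ 2 in SY_le SX_le dot1 dot2 *.
have P_ge1 : 1 <= P by rewrite exprn_ege1 // ler1n.
have PD_le : P * hsnorm2 (run u D) <= P * (4 * hsnorm2 z) by rewrite ler_wpM2l ?(le_trans ler01).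
have PD'_le : P * hsnorm2 D' <= P * (4 * hsnorm2 z') by rewrite ler_wpM2l ?(le_trans ler01).
have D'_P : 8 * hsnorm2 z' <= P * (8 * hsnorm2 z').
  by rewrite ler_peMl // mulr_ge0 ?hsnorm2_ge0.
nra.
Qed.

End ErgodicAverage.

Lemma ltr_bound_succ_mul (R : archiFieldType) (K d : R) :
  0 <= K -> 0 < d -> K < (Num.bound (K / d)).+1%:R * d.
Proof.
move=> K_ge0 d_gt0; have := archi_boundP (divr_ge0 K_ge0 (ltW d_gt0)).
by rewrite ltr_pdivrMr // => /lt_le_trans; apply; rewrite ler_pM2r // ler_nat.
Qed.

Lemma quadratic_gap_absurd (R : realFieldType) (N K d D : R) : 0 < N -> 0 < d ->
  K < N * d -> 2 * d * N ^+ 2 <= D -> 2 * N * D <= N ^+ 2 * K -> False.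
Proof.
move=> N_gt0 d_gt0 K_lt D_ge DK.
have : N ^+ 2 * (4 * d * N) <= N ^+ 2 * K.
  apply: le_trans DK; rewrite [X in X <= _](_ : _ = 2 * N * (2 * d * N ^+ 2)); last by ring.
  by rewrite ler_pM2l ?mulr_gt0.
rewrite ler_pM2l ?exprn_gt0 //; have : 0 < N * d by rewrite mulr_gt0.
lra.
Qed.

Section Nerode.
Variables (Sigma : finType) (L : pred (seq Sigma)).

(* The easy half of Myhill-Nerode: a finite-valued invariant refining the right
   Nerode congruence yields a DFA whose states are its values. *)
Lemma regular_of_nerode_invariant (Q : finType) (f : seq Sigma -> Q) :
  (forall w w', f w = f w' -> forall y, L (w ++ y) = L (w' ++ y)) -> regular L.
Proof.
move=> f_nerode.
pose rep (k : Q) := epsilon (inhabits [::]) (fun w => f w = k).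
have repK w : f (rep (f w)) = f w.
  exact: (epsilon_spec (inhabits [::]) (fun w' => f w' = f w) (ex_intro _ w erefl)).
pose delta k s := f (rep k ++ [:: s]).
have run_rep w y : L (rep (foldl delta (f [::]) w) ++ y) = L (w ++ y).
  elim/last_ind: w y => [|w s IH] y; first by apply: f_nerode; rewrite repK.
  by rewrite foldl_rcons (f_nerode _ _ (repK _)) -catA IH cat_rcons.
exists Q, (f [::]), delta, (fun k => L (rep k)) => w.
by rewrite -[in LHS](cats0 w) -run_rep cats0.
Qed.

End Nerode.

Section SyntacticCongruence.
Variables (Sigma : finType) (L : pred (seq Sigma)).
Local Notation "u ~ v" := (synt_eq L u v) (at level 70).

Lemma synt_sym u v : u ~ v -> v ~ u. Proof. by move=> uv x y; rewrite uv. Qed.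

Lemma synt_trans u v w : u ~ v -> v ~ w -> u ~ w.
Proof. by move=> uv vw x y; rewrite uv vw. Qed.

Lemma synt_cong a b u v : u ~ v -> a ++ u ++ b ~ a ++ v ++ b.
Proof.
by move=> uv x y; rewrite -!catA catA [x ++ a ++ v ++ _]catA (uv (x ++ a) (b ++ y)).
Qed.

Lemma synt_congl a u v : u ~ v -> a ++ u ~ a ++ v.
Proof. by move=> uv; have := synt_cong a [::] uv; rewrite !cats0. Qed.

Lemma synt_congr b u v : u ~ v -> u ++ b ~ v ++ b.
Proof. exact: synt_cong [::] b u v. Qed.

Lemma synt_wpow_idem e : wpow e 2 ~ e -> forall k, (0 < k)%N -> wpow e k ~ e.
Proof.
move=> e2; elim=> [//|[|k] IH] _; first by rewrite /wpow /= cats0.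
rewrite wpowS; apply: synt_trans (synt_congl e (IH isT)) _.
by move: e2; rewrite /wpow /= cats0.
Qed.

Hypothesis L_regular : regular L.

(* Pigeonhole on the transition maps of the powers of X. *)
Lemma synt_wpow_idem_exists X : exists2 p, (0 < p)%N & wpow X (p + p) ~ wpow X p.
Proof.
case: L_regular => Q [q0 [delta [Fin LF]]].
pose f n : {ffun Q -> Q} := [ffun q => foldl delta q (wpow X n)].
have fD n k : f (n + k)%N = [ffun q => f k (f n q)].
  by apply/ffunP => q; rewrite !ffunE wpowD foldl_cat.
have f_synt n k : f n = f k -> wpow X n ~ wpow X k.
  move=> fnk x y; rewrite !LF !foldl_cat.
  by have := congr1 (fun g : {ffun Q -> Q} => g (foldl delta q0 x)) fnk; rewrite !ffunE => ->.
have [i [j [ij fij]]] : exists i j, (i < j)%N /\ f i = f j.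
  pose F (i : 'I_(#|{ffun Q -> Q}|.+1)) := f i.
  have /injectivePn [i [j ij Fij]] : ~~ injectiveb F.
    by apply/negP => /injectiveP /leq_card; rewrite card_ord ltnn.
  case: (ltngtP i j) => [lt|gt|eq]; [by exists i, j | by exists j, i |].
  by move: ij; rewrite (ord_inj eq) eqxx.
pose d := (j - i)%N.
have f_periodic a k : (i <= a)%N -> f (a + k * d)%N = f a.
  move=> ia; elim: k => [|k IH]; first by rewrite addn0.
  have -> : (a + k.+1 * d = j + (a - i + k * d))%N by rewrite mulSn /d; lia.
  by rewrite fD -fij -fD -IH; congr f; lia.
exists (i.+1 * d)%N; first by rewrite muln_gt0 /d subn_gt0 ij.
apply: f_synt; rewrite f_periodic // /d.
by apply: leq_trans (leq_pmulr _ _); rewrite ?subn_gt0.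
Qed.

Lemma synt_wpow_idem_exists2 X Y :
  exists p, [/\ (0 < p)%N, wpow X (p + p) ~ wpow X p & wpow Y (p + p) ~ wpow Y p].
Proof.
have [p1 p1_gt0 X1] := synt_wpow_idem_exists X.
have [p2 p2_gt0 Y2] := synt_wpow_idem_exists Y.
have X1' : wpow (wpow X p1) 2 ~ wpow X p1 by rewrite -wpowM muln2 -addnn.
have Y2' : wpow (wpow Y p2) 2 ~ wpow Y p2 by rewrite -wpowM muln2 -addnn.
exists (p1 * p2)%N; split; first by rewrite muln_gt0 p1_gt0.
  rewrite -mulnDr !wpowM; apply: synt_trans (synt_wpow_idem X1' _) _.
    by rewrite addn_gt0 p2_gt0.
  by apply/synt_sym/synt_wpow_idem.
rewrite mulnC -mulnDr !wpowM; apply: synt_trans (synt_wpow_idem Y2' _) _.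
  by rewrite addn_gt0 p1_gt0.
by apply/synt_sym/synt_wpow_idem.
Qed.

Lemma synt_absorb u X Y : u ~ X ++ u ++ Y ->
  exists2 p, (0 < p)%N & forall n n', u ~ wpow (wpow X p) n ++ u ++ wpow (wpow Y p) n'.
Proof.
move=> uXY; have [p [p_gt0 Xp Yp]] := synt_wpow_idem_exists2 X Y.
exists p => //; set Z := wpow X p; set W := wpow Y p.
have uZW : u ~ Z ++ u ++ W.
  rewrite /Z /W; elim: p {p_gt0 Xp Yp Z W} => [|k IH]; first by rewrite /wpow /= cats0.
  apply: synt_trans IH _; have := synt_cong (wpow X k) (wpow Y k) uXY.
  by rewrite wpowSr wpowS !catA.
have uZ : u ~ Z ++ u.
  apply: synt_sym; apply: synt_trans (synt_congl Z uZW) _; apply: synt_trans _ (synt_sym uZW).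
  by have := synt_congr (u ++ W) Xp; rewrite wpowD !catA.
have uW : u ~ u ++ W.
  apply: synt_sym; apply: synt_trans (synt_congr W uZW) _; apply: synt_trans _ (synt_sym uZW).
  by have := synt_congl (Z ++ u) Yp; rewrite wpowD !catA.
have uZn n : u ~ wpow Z n ++ u.
  elim: n => [|n IH] //; apply: synt_trans IH _.
  by rewrite wpowSr -catA; apply: synt_congl.
have uWn n : u ~ u ++ wpow W n.
  elim: n => [|n IH]; first by rewrite /wpow /= cats0.
  by apply: synt_trans IH _; rewrite wpowS catA; apply: synt_congr.
by move=> n n'; apply: synt_trans (uZn n) _; apply: synt_congl.
Qed.

End SyntacticCongruence.

Section IsolatedCutPoint.
Variables (R : realType) (Sigma : finType) (m : nat) (A : mon1qfa R Sigma m).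
Variables (L : pred (seq Sigma)) (lam d : R).
Hypothesis L_acc : forall x, L x <-> lam < acc_prob A x.
Hypothesis d_gt0 : 0 < d.
Hypothesis acc_isolated : forall x, d <= `|acc_prob A x - lam|.
Local Notation M := 'M[R[i]]_m.
Local Notation coord_index := ('I_m * 'I_m * bool)%type.
Local Notation "u ~ v" := (synt_eq L u v) (at level 70).

Lemma acc_prob_mem x : L x -> lam + d <= acc_prob A x.
Proof.
move=> /L_acc lt_x; have := acc_isolated x.
by rewrite ger0_norm; [lra | rewrite subr_ge0 ltW].
Qed.

Lemma acc_prob_nmem x : ~~ L x -> acc_prob A x <= lam - d.
Proof.
move=> Lx; have le_x : acc_prob A x <= lam.
  by rewrite leNgt; apply: contra Lx => /L_acc.
by have := acc_isolated x; rewrite ler0_norm; [lra | rewrite subr_le0].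
Qed.

Lemma mem_acc_prob_close x y :
  `|acc_prob A x - acc_prob A y| < 2 * d -> L x = L y.
Proof.
rewrite ltr_norml => /andP [lo hi].
case Lx: (L x); case Ly: (L y) => //.
  by have := acc_prob_mem Lx; have := acc_prob_nmem (negbT Ly); lra.
by have := acc_prob_mem Ly; have := acc_prob_nmem (negbT Lx); lra.
Qed.

Lemma synt_letters_idem_cutpoint : synt_letters_idem L.
Proof.
move=> s x y; apply: mem_acc_prob_close.
by rewrite !acc_prob_cat !run_cons measure_step_idem subrr normr0 mulr_gt0.
Qed.

(* Regularity: the reachable states lie in a bounded set, so rounding their
   coordinates to a grid of step 1/N has finitely many values, and for N large
   enough two states in the same cell give acceptance probabilities closer than
   2d on every suffix. *)
Let state_bound : R := hsnorm2 (rho0 A) + 1.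

Lemma rho_coord_bound w t : `|mx_coord (rho_of A w) t| <= state_bound.
Proof.
have sq_le : mx_coord (rho_of A w) t ^+ 2 <= hsnorm2 (rho0 A).
  exact: le_trans (sqr_mx_coord_le _ _) (hsnorm2_run_le _ _ _).
have := sqr_ge0 (mx_coord (rho_of A w) t - 1/2).
have := sqr_ge0 (mx_coord (rho_of A w) t + 1/2).
by rewrite ler_norml /state_bound; move=> *; apply/andP; split; nra.
Qed.

Let grid : nat := (Num.bound ((hsnorm2 (accept_proj A) + #|{: coord_index}|%:R) / d)).+1.

Lemma grid_large : hsnorm2 (accept_proj A) + #|{: coord_index}|%:R < grid%:R * d.
Proof. by apply: ltr_bound_succ_mul; rewrite ?addr_ge0 ?hsnorm2_ge0. Qed.

Let cell (X : M) t : nat := Num.truncn (grid%:R * (mx_coord X t + state_bound)).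
Let ncells : nat := Num.truncn (grid%:R * (2 * state_bound)).

Lemma cell_arg_ge0 w t : 0 <= grid%:R * (mx_coord (rho_of A w) t + state_bound).
Proof.
rewrite mulr_ge0 ?ler0n //.
by have := rho_coord_bound w t; rewrite ler_norml => /andP [lo _]; lra.
Qed.

Lemma cell_le w t : (cell (rho_of A w) t <= ncells)%N.
Proof.
rewrite truncn_ge_nat ?mulr_ge0 ?ler0n //; last first.
  by have := hsnorm2_ge0 (rho0 A); rewrite /state_bound; lra.
apply: le_trans (_ : _ <= grid%:R * (mx_coord (rho_of A w) t + state_bound)) _.
  by rewrite truncn_le cell_arg_ge0.
rewrite ler_wpM2l ?ler0n //.
by have := rho_coord_bound w t; rewrite ler_norml => /andP [_ hi]; lra.
Qed.

Definition cell_of w : {ffun coord_index -> 'I_ncells.+1} :=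
  [ffun t => inord (cell (rho_of A w) t)].

Lemma cell_of_coord w w' t : cell_of w = cell_of w' ->
  (grid%:R * (mx_coord (rho_of A w) t - mx_coord (rho_of A w') t)) ^+ 2 < 1.
Proof.
move=> /ffunP /(_ t); rewrite !ffunE => /(congr1 (@nat_of_ord _)).
rewrite !inordK ?ltnS ?cell_le // /cell => eq_cell.
have := truncn_itv (cell_arg_ge0 w t); have := truncn_itv (cell_arg_ge0 w' t).
rewrite eq_cell; set n := Num.truncn _ => /andP [lo' hi'] /andP [lo hi].
have : `|grid%:R * (mx_coord (rho_of A w) t - mx_coord (rho_of A w') t)| < 1.
  rewrite ltr_norml; apply/andP; split.
    by move: lo hi'; rewrite -natr1; nra.
  by move: hi lo'; rewrite -natr1; nra.
set D := grid%:R * _ => D_lt1.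
by rewrite -real_normK ?num_real //; have := normr_ge0 D; nra.
Qed.

Lemma cell_of_hsnorm2 w w' : cell_of w = cell_of w' ->
  grid%:R ^+ 2 * hsnorm2 (rho_of A w - rho_of A w') <= #|{: coord_index}|%:R.
Proof.
move=> eq_cell; rewrite /hsnorm2 /hsdot mulr_sumr -sum1_card natr_sum.
apply: ler_sum => t _; rewrite mx_coordD mx_coordN -expr2 -exprMn.
exact/ltW/cell_of_coord.
Qed.

Lemma cell_of_nerode w w' : cell_of w = cell_of w' -> forall y, L (w ++ y) = L (w' ++ y).
Proof.
move=> eq_cell y; apply: mem_acc_prob_close.
have := acc_prob_cat A w [::] y; have := acc_prob_cat A w' [::] y.
rewrite !cat0s => -> -> /=; rewrite -hsdotBr.
set q := run _ _ _; set D := rho_of A w - rho_of A w'.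
have q_le : hsnorm2 q <= hsnorm2 (accept_proj A) by apply: hsnorm2_run_le.
have D_le := cell_of_hsnorm2 eq_cell.
have := hsdot_le q D (ler0n _ grid) ler01.
rewrite expr1n mul1r mulr1 => dot_le.
have large := grid_large.
have grid_gt0 : 0 < grid%:R :> R by rewrite ltr0n.
have grid_d_gt0 : 0 < grid%:R * d by rewrite mulr_gt0.
suff : 2 * grid%:R * `|hsdot q D| < 2 * grid%:R * (2 * d) by rewrite ltr_pM2l ?mulr_gt0.
nra.
Qed.

Lemma regular_cutpoint : regular L.
Proof. exact: regular_of_nerode_invariant cell_of_nerode. Qed.

Lemma double_sum_acc_gap N (F G : 'I_N -> 'I_N -> seq Sigma) :
  (forall i j, L (F i j)) -> (forall i j, ~~ L (G i j)) ->
  2 * d * N%:R ^+ 2 <=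
  \sum_i \sum_j acc_prob A (F i j) - \sum_i \sum_j acc_prob A (G i j).
Proof.
move=> LF LG; rewrite -sumrB.
apply: le_trans (_ : \sum_(i < N) \sum_(j < N) 2 * d <= _).
  by rewrite !sumr_const !card_ord -mulrnA -[_ *+ (N * N)%N]mulr_natr natrM expr2.
apply: ler_sum => i _; rewrite -sumrB; apply: ler_sum => j _.
have := acc_prob_mem (LF i j).
by have := acc_prob_nmem (LG i j); lra.
Qed.

(* The heart of J-triviality: if u absorbs the powers of Zw on its left and of
   Ww on its right, inserting letters of Zw and Ww around u changes the state
   by coboundaries, which the ergodic averages of [ergodic_pair] wash out. *)
Lemma synt_insert_letters u c e Zw Ww :
  (forall n n', u ~ wpow Zw n ++ u ++ wpow Ww n') ->
  {subset c <= Zw} -> {subset e <= Ww} -> u ~ c ++ u ++ e.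
Proof.
move=> absorb cZ eW x y.
set rho := rho_of A x; set q := run A (rev y) (accept_proj A).
have [z zE] := coboundary_of_subset A rho cZ.
have [z' z'E] : exists z', run A (rev e) q - q = z' - run A (rev Ww) z'.
  by apply: coboundary_of_subset => s; rewrite !mem_rev; apply: eW.
pose K := hsnorm2 rho + 2 * hsnorm2 q + 4 * hsnorm2 z + 12 * hsnorm2 z'.
pose N := (Num.bound (K / d)).+1.
have K_lt : K < N%:R * d.
  by apply: ltr_bound_succ_mul; rewrite ?addr_ge0 ?mulr_ge0 ?hsnorm2_ge0.
have := ergodic_pair_coboundary_le A Zw Ww u rho q z z' (ltn0Sn _ : (0 < N)%N).
rewrite -zE -z'E (addrC rho) (addrC q) !subrK -!run_cat -rev_cat -/q !ergodic_pair_acc -/K.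
set Sc := \sum_i _; set Su := \sum_i _ => gap.
have memSu i j : L (x ++ (wpow Zw j ++ u ++ wpow Ww i) ++ y) = L (x ++ u ++ y).
  by rewrite -absorb.
have memSc i j : L ((x ++ c) ++ (wpow Zw j ++ u ++ wpow Ww i) ++ (e ++ y)) =
                 L (x ++ (c ++ u ++ e) ++ y).
  by rewrite -absorb !catA.
suff no_gap : ~ 2 * d * N%:R ^+ 2 <= `|Sc - Su|.
  case Lu : (L (x ++ u ++ y)); case Lc : (L (x ++ (c ++ u ++ e) ++ y)) => //; exfalso; apply: no_gap.
    rewrite distrC ler_normr (double_sum_acc_gap (F := fun i j => _) (G := fun i j => _)) //.
      by move=> i j; rewrite memSu.
    by move=> i j; rewrite memSc Lc.
  rewrite ler_normr (double_sum_acc_gap (F := fun i j => _) (G := fun i j => _)) //.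
    by move=> i j; rewrite memSc.
  by move=> i j; rewrite memSu Lu.
by move=> big; apply: quadratic_gap_absurd K_lt big gap; rewrite ?ltr0n.
Qed.

Lemma synt_J_trivial_cutpoint : synt_J_trivial L.
Proof.
move=> u v ideal_uv.
have [a [b uv]] : in_ideal L v u by apply/ideal_uv; exists [::], [::]; rewrite cats0.
have [c [e vu]] : in_ideal L u v by apply/ideal_uv; exists [::], [::]; rewrite cats0.
have uXY : u ~ (a ++ c) ++ u ++ (e ++ b).
  by apply: synt_trans uv _; have := synt_cong a b vu; rewrite !catA.
have [p p_gt0 absorb] := synt_absorb regular_cutpoint uXY.
have mem_wpow (w : seq Sigma) s : s \in w -> s \in wpow w p.
  by case: p p_gt0 {absorb} => // k _ sw; rewrite wpowS mem_cat sw.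
apply: synt_trans (synt_insert_letters absorb _ _) (synt_sym vu) => s sw.
  by apply: mem_wpow; rewrite mem_cat sw orbT.
by apply: mem_wpow; rewrite mem_cat sw.
Qed.

End IsolatedCutPoint.

Theorem theorem4 (R : realType) (Sigma : finType) (L : pred (seq Sigma)) :
  LMO R L -> in_V_Jbar L.
Proof.
move=> [m [A [lam [L_acc [d d_gt0 acc_isolated]]]]].
split; first exact: (regular_cutpoint L_acc d_gt0 acc_isolated).
split; first exact: (synt_J_trivial_cutpoint L_acc d_gt0 acc_isolated).
exact: (synt_letters_idem_cutpoint L_acc d_gt0 acc_isolated).
Qed.
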